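(* Consider the ample-reserves (lending constraint slack) equilibrium conditions with nominal rate $i>0$. If the interest on reserves is set to $i_r=i+\gamma'(\underline r)$, where $\underline r>0$ solves $\gamma'(\underline r)\underline r-\gamma(\underline r)=k$, then consumption in type-2 meetings is efficient: $q_2=q^*$.
   Context: DM preferences: $u,c$ with $u'>0,u''<0$, $c'>0,c''\ge0$, $u(0)=c(0)=0$, $q^*$ solves $u'(q^* )=c'(q^* )$; with buyer bargaining power $\theta\in(0,1]$, the liquidity premium is $\lambda(q)=\theta[u'(q)-c'(q)]/[(1-\theta)u'(q)+\theta c'(q)]$ for $q<q^*$, $\lambda(q^* )=0$, strictly decreasing on $[0,q^* )$. A type-2 buyer (who can pay with cash, deposits and bank notes, but not unsecured credit) consumes $q_2$ with $\lambda(q_2)=i_\ell$ when borrowing from banks. Bank cost functions $\gamma,\eta:[0,\infty)\to[0,\infty)$ twice differentiable with $\gamma',\gamma''>0$, $\eta',\eta''>0$ on $(0,\infty)$, $\gamma(0)=\gamma'(0)=\eta(0)=\eta'(0)=0$; entry cost $k>0$. In the ample-reserves equilibrium the bank's reserves $\tilde r$ and loans $\tilde\ell\ge0$ satisfy $i_d=i_r-\gamma'(\tilde r)$, $i_\ell=\eta'(\tilde\ell)$, $1+i=(1+i_d)(1+i_\ell)$, and $\gamma'(\tilde r)\tilde r-\gamma(\tilde r)+\eta'(\tilde\ell)\tilde\ell-\eta(\tilde\ell)=k$. *)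

From Stdlib Require Import Reals.
From Coquelicot Require Import Coquelicot.
Open Scope R_scope.

(* Liquidity premium lambda(q) with buyer bargaining power theta;
   u1, c1 are the derivatives u', c'.  lambda(q) given by the formula for q < qstar,
   and 0 at qstar (only evaluated on (0, qstar]). *)
Definition liq_premium (theta : R) (u1 c1 : R -> R) (qstar q : R) : R :=
  if Rlt_dec q qstar then
    theta * (u1 q - c1 q) / ((1 - theta) * u1 q + theta * c1 q)
  else 0.

Definition right_deriv0 (f : R -> R) (d : R) : Prop :=
  filterlim (fun h => (f h - f 0) / h) (at_right 0) (locally d).

(* Write S_f(x) = f'(x) x - f(x) for a cost function f.  Convexity with
   f(0) = f'(0) = 0 gives S_eta >= 0, so the entry condition forces
   S_gamma(r) <= k = S_gamma(rbar); as S_gamma is strictly increasing, r <= rbar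
   and hence gamma'(r) <= gamma'(rbar), i.e. i_d >= i.  The Fisher relation
   (1 + i) = (1 + i_d)(1 + i_l) then leaves no room for a positive loan rate,
   so lambda(q2) = i_l = 0, which happens only at q2 = q*. *)
From Stdlib Require Import Reals Lra Psatz.
From Coquelicot Require Import Coquelicot.
Open Scope R_scope.

Lemma filterlim_at_right_id (x : R) : filterlim (fun h : R => h) (at_right x) (locally x).
Proof. intros P [e He]. exists e. intros y Hy _. now apply He. Qed.

Lemma right_deriv0_continuous (f : R -> R) (d : R) :
  right_deriv0 f d -> filterlim f (at_right 0) (locally (f 0)).
Proof.
  intros Hd.
  assert (Hprod := filterlim_comp_2 _ _ Rmult Hd (filterlim_at_right_id 0) (filterlim_mult d 0)).
  change (mult d 0) with (d * 0) in Hprod. rewrite Rmult_0_r in Hprod.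
  apply filterlim_ext_loc with (fun h => f 0 + (f h - f 0) / h * h).
  - exists (mkposreal 1 Rlt_0_1). intros y _ Hy. field. lra.
  - assert (Hsum := filterlim_comp_2 _ _ Rplus (filterlim_const (f 0)) Hprod (filterlim_plus (f 0) 0)).
    change (plus (f 0) 0) with (f 0 + 0) in Hsum. now rewrite Rplus_0_r in Hsum.
Qed.

Section DerivativeOnPositiveReals.

Variables f df : R -> R.
Hypothesis f_deriv : forall x, 0 < x -> is_derive f x (df x).

Lemma MVT_pos (a b : R) : 0 < a -> a < b ->
  exists c, a <= c <= b /\ f b - f a = df c * (b - a).
Proof.
  intros Ha Hab.
  destruct (MVT_gen f a b df) as [c [Hc E]].
  - intros x Hx. apply f_deriv. rewrite Rmin_left in Hx; lra.
  - intros x Hx. apply continuity_pt_filterlim.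
    apply (@ex_derive_continuous R_AbsRing R_NormedModule).
    eexists. apply f_deriv. rewrite Rmin_left in Hx; lra.
  - exists c. rewrite Rmin_left, Rmax_right in Hc; lra.
Qed.

Lemma increasing_of_deriv_pos : (forall x, 0 < x -> 0 < df x) ->
  forall a b, 0 < a -> a < b -> f a < f b.
Proof.
  intros Hpos a b Ha Hab. destruct (MVT_pos a b Ha Hab) as [c [Hc E]].
  assert (0 < df c) by (apply Hpos; lra). nra.
Qed.

Lemma nondecreasing_of_deriv_nonneg : (forall x, 0 < x -> 0 <= df x) ->
  forall a b, 0 < a -> a <= b -> f a <= f b.
Proof.
  intros Hnn a b Ha Hab. destruct (Req_dec a b) as [<- | Hne]; [lra |].
  destruct (MVT_pos a b Ha ltac:(lra)) as [c [Hc E]].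
  assert (0 <= df c) by (apply Hnn; lra). nra.
Qed.

Definition surplus (x : R) : R := df x * x - f x.

Lemma surplus_nonneg : f 0 = 0 -> right_deriv0 f 0 ->
  (forall a b, 0 < a -> a <= b -> df a <= df b) ->
  forall x, 0 <= x -> 0 <= surplus x.
Proof.
  intros Hf0 Hd0 Hmono x Hx. unfold surplus.
  destruct (Req_dec x 0) as [-> | Hx0]; [rewrite Hf0; lra |].
  (* Chords over [y, x] have slope at most f'(x); then let y -> 0+. *)
  assert (Hchord : forall y, 0 < y < x -> f x - df x * x <= f y - df x * y).
  { intros y Hy. destruct (MVT_pos y x ltac:(lra) ltac:(lra)) as [c [Hc E]].
    assert (df c <= df x) by (apply Hmono; lra). nra. }
  assert (Hlin := filterlim_comp _ _ _ _ _ _ _ _ (filterlim_at_right_id 0)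
                    (filterlim_scal_r (- df x) 0)).
  assert (Hlim := filterlim_comp_2 _ _ Rplus (right_deriv0_continuous f 0 Hd0) Hlin
                    (filterlim_plus (f 0) (scal (- df x) 0))).
  change (plus (f 0) (scal (- df x) 0)) with (f 0 + - df x * 0) in Hlim.
  rewrite Hf0, Rmult_0_r, Rplus_0_r in Hlim.
  assert (Hev : at_right 0 (fun y => f x - df x * x <= f y + scal (- df x) y)).
  { exists (mkposreal x ltac:(lra)). intros y Hy Hy0.
    change (Rabs (y - 0) < x) in Hy. rewrite Rminus_0_r, Rabs_pos_eq in Hy by lra.
    change (scal (- df x) y) with (- df x * y). specialize (Hchord y ltac:(lra)). lra. }
  assert (Hle := filterlim_le _ _ (f x - df x * x) 0 Hev (filterlim_const _) Hlim).
  simpl in Hle. lra.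
Qed.

Lemma surplus_lt : (forall a b, 0 < a -> a < b -> df a < df b) ->
  forall a b, 0 < a -> a < b -> surplus a < surplus b.
Proof.
  intros Hmono a b Ha Hab. unfold surplus.
  destruct (MVT_pos a b Ha Hab) as [c [Hc E]].
  assert (df c <= df b).
  { destruct (Req_dec c b) as [-> | Hcb]; [lra |]. left; apply Hmono; lra. }
  assert (df a < df b) by (apply Hmono; lra).
  nra.
Qed.

End DerivativeOnPositiveReals.

Lemma liq_premium_pos (theta : R) (u1 c1 : R -> R) (qstar q : R) :
  0 < theta <= 1 -> q < qstar -> 0 < c1 q -> c1 q < u1 q ->
  0 < liq_premium theta u1 c1 qstar q.
Proof.
  intros Htheta Hq Hc1 Hgap. unfold liq_premium.
  destruct (Rlt_dec q qstar) as [_ | Hn]; [| lra].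
  apply Rdiv_lt_0_compat; nra.
Qed.

Lemma marginal_gap_below_efficient (u1 u2 c1 c2 : R -> R) (qstar q : R) :
  (forall x, 0 < x -> is_derive u1 x (u2 x)) -> (forall x, 0 < x -> u2 x < 0) ->
  (forall x, 0 < x -> is_derive c1 x (c2 x)) -> (forall x, 0 < x -> 0 <= c2 x) ->
  u1 qstar = c1 qstar -> 0 < q < qstar -> c1 q < u1 q.
Proof.
  intros Hu2 Hu2neg Hc2 Hc2nn Hqstar Hq.
  assert (Hu1 : - u1 q < - u1 qstar).
  { apply (increasing_of_deriv_pos (fun x => - u1 x) (fun x => - u2 x)); try lra.
    - intros x Hx. exact (is_derive_opp _ _ _ (Hu2 x Hx)).
    - intros x Hx. specialize (Hu2neg x Hx). lra. }
  assert (Hc1 : c1 q <= c1 qstar) by (apply (nondecreasing_of_deriv_nonneg c1 c2 Hc2 Hc2nn); lra).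
  lra.
Qed.

Lemma loan_rate_zero (i i_d i_l : R) :
  0 < i -> i <= i_d -> 0 <= i_l -> 1 + i = (1 + i_d) * (1 + i_l) -> i_l = 0.
Proof. intros. nra. Qed.
Theorem proposition3
  (* DM preferences: u, c with derivatives u1, c1 and second derivatives u2, c2 *)
  (u u1 u2 c c1 c2 : R -> R) (qstar theta : R)
  (Hu1 : forall q, 0 < q -> is_derive u q (u1 q))
  (Hu2 : forall q, 0 < q -> is_derive u1 q (u2 q))
  (Hc1 : forall q, 0 < q -> is_derive c q (c1 q))
  (Hc2 : forall q, 0 < q -> is_derive c1 q (c2 q))
  (Hu1pos : forall q, 0 < q -> 0 < u1 q)
  (Hu2neg : forall q, 0 < q -> u2 q < 0)
  (Hc1pos : forall q, 0 < q -> 0 < c1 q)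
  (Hc2nn : forall q, 0 < q -> 0 <= c2 q)
  (Hu0 : u 0 = 0) (Hc0 : c 0 = 0)
  (Hqstar : 0 < qstar) (Hqstar_eq : u1 qstar = c1 qstar)
  (Htheta : 0 < theta <= 1)
  (* bank cost functions gamma, eta, twice differentiable on [0,oo) *)
  (gam gam1 gam2 eta eta1 eta2 : R -> R) (k : R)
  (Hg1 : forall x, 0 < x -> is_derive gam x (gam1 x))
  (Hg2 : forall x, 0 < x -> is_derive gam1 x (gam2 x))
  (Hg1_0 : right_deriv0 gam (gam1 0))
  (Hg2_0 : right_deriv0 gam1 (gam2 0))
  (Hg1pos : forall x, 0 < x -> 0 < gam1 x)
  (Hg2pos : forall x, 0 < x -> 0 < gam2 x)
  (Hg0 : gam 0 = 0) (Hg10 : gam1 0 = 0)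
  (He1 : forall x, 0 < x -> is_derive eta x (eta1 x))
  (He2 : forall x, 0 < x -> is_derive eta1 x (eta2 x))
  (He1_0 : right_deriv0 eta (eta1 0))
  (He2_0 : right_deriv0 eta1 (eta2 0))
  (He1pos : forall x, 0 < x -> 0 < eta1 x)
  (He2pos : forall x, 0 < x -> 0 < eta2 x)
  (He0 : eta 0 = 0) (He10 : eta1 0 = 0)
  (Hk : 0 < k)
  (* policy: nominal rate i > 0, interest on reserves i_r = i + gamma'(rbar) *)
  (i i_r i_d i_l : R) (rbar : R)
  (Hi : 0 < i)
  (Hrbar : 0 < rbar) (Hrbar_eq : gam1 rbar * rbar - gam rbar = k)
  (Hir : i_r = i + gam1 rbar)
  (* ample-reserves equilibrium conditions *)
  (rt lt q2 : R)
  (Hrt : 0 <= rt) (Hlt : 0 <= lt)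
  (Hid : i_d = i_r - gam1 rt)
  (Hil : i_l = eta1 lt)
  (Hfisher : 1 + i = (1 + i_d) * (1 + i_l))
  (Hentry : gam1 rt * rt - gam rt + (eta1 lt * lt - eta lt) = k)
  (* type-2 consumption when borrowing from banks *)
  (Hq2 : 0 < q2 <= qstar)
  (Hlam : liq_premium theta u1 c1 qstar q2 = i_l) :
  q2 = qstar.
Proof.
  assert (Hgam1_incr := increasing_of_deriv_pos gam1 gam2 Hg2 Hg2pos).
  assert (Heta1_mono := nondecreasing_of_deriv_nonneg eta1 eta2 He2
                          (fun x Hx => Rlt_le _ _ (He2pos x Hx))).
  assert (Heta_surplus : 0 <= surplus eta eta1 lt).
  { rewrite He10 in He1_0. exact (surplus_nonneg eta eta1 He1 He0 He1_0 Heta1_mono lt Hlt). }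
  assert (Hrt_le : rt <= rbar).
  { apply Rnot_lt_le. intros Hrbar_rt.
    assert (Hgam_surplus := surplus_lt gam gam1 Hg1 Hgam1_incr rbar rt Hrbar Hrbar_rt).
    unfold surplus in *. lra. }
  assert (Hgam1_le : gam1 rt <= gam1 rbar).
  { destruct (Req_dec rt 0) as [-> | Hrt0].
    - rewrite Hg10. left. now apply Hg1pos.
    - destruct (Req_dec rt rbar) as [-> | Hne]; [lra |]. left. apply Hgam1_incr; lra. }
  assert (Hil_nonneg : 0 <= i_l).
  { rewrite Hil. destruct (Req_dec lt 0) as [-> | Hlt0]; [lra |]. left. apply He1pos. lra. }
  assert (Hil0 : i_l = 0) by (apply (loan_rate_zero i i_d i_l); lra).
  destruct (Rle_lt_or_eq_dec q2 qstar (proj2 Hq2)) as [Hbelow | ->]; [exfalso | reflexivity].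
  assert (Hgap := marginal_gap_below_efficient u1 u2 c1 c2 qstar q2 Hu2 Hu2neg Hc2 Hc2nn
                    Hqstar_eq ltac:(lra)).
  assert (Hpos := liq_premium_pos theta u1 c1 qstar q2 Htheta Hbelow (Hc1pos q2 (proj1 Hq2)) Hgap).
  lra.
Qed.
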